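(* Let $\mathrm{X} \coloneqq \{\lambda_1, \dots, \lambda_L\}$, $\mathrm{X}_1 \coloneqq \{\lambda_2, \dots, \lambda_L\}$ and $\mathrm{X}_1^0 \coloneqq \{\lambda_0, \lambda_2, \dots, \lambda_L\}$. The functions $\mathcal{Z}$ and $\bar{\mathcal{H}}$ satisfy \[ \bar{\Omega}_0 \; \mathcal{Z}(\mathrm{X}) + \bar{\Omega}_1 \; \mathcal{Z}(\mathrm{X}_1^0) = \bar{\Upsilon}_0 \; \bar{\mathcal{H}} (\lambda_1 , \lambda_0 \mid \mathrm{X}_1)+ \bar{\Upsilon}_1 \; \bar{\mathcal{H}} (\lambda_0 , \lambda_1 \mid \mathrm{X}_1), \] with coefficients \begin{align*} \bar{\Omega}_0 &\coloneqq \left[\frac{d_{1,1}(\lambda_1 - \lambda_0)}{d_{1,2}(\lambda_1 - \lambda_0)} - \frac{d_{3,1}(\lambda_1 - \lambda_0)}{ d_{3,2}(\lambda_1 - \lambda_0)} \right] \bar{\Lambda} (\lambda_0), \qquad \bar{\Omega}_1 \coloneqq \frac{a(\lambda_1 - \lambda_0)}{ d_{3,2}(\lambda_1 - \lambda_0)} \bar{\Lambda} (\lambda_1), \\ \bar{\Upsilon}_0 &\coloneqq \left[ \frac{d_{2,1}(\lambda_1 - \lambda_0)}{ d_{3,2}(\lambda_1 - \lambda_0)} - \frac{d_{2,2}(\lambda_1 - \lambda_0)}{ d_{3,2}(\lambda_1 - \lambda_0)} \frac{d_{1,1}(\lambda_1 - \lambda_0)}{d_{1,2}(\lambda_1 -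 \lambda_0)} \right] \bar{\omega}(\lambda_0), \qquad \bar{\Upsilon}_1 \coloneqq \frac{a(\lambda_1 - \lambda_0)}{ d_{3,2}(\lambda_1 - \lambda_0)} \frac{d_{1,1}(\lambda_1 - \lambda_0)}{d_{1,2}(\lambda_1 - \lambda_0)} \bar{\omega}(\lambda_1). \end{align*}
   Context: Setting: the Izergin–Korepin (IK) and Fateev–Zamolodchikov (FZ) nineteen-vertex models. With $x = e^{2\lambda}$, $q = e^{\gamma}$ and $\zeta = q$ (FZ) or $\zeta = -q^3$ (IK), the statistical weights are $a(\lambda) = (x-\zeta)(x-q^2)$, $b(\lambda) = q(x-1)(x-\zeta)$, $c(\lambda) = (1-q^2)(x-\zeta)$, $\bar c(\lambda) = x(1-q^2)(x-\zeta)$, and, with $\beta' \coloneqq 4-\beta$, $d_{\alpha,\beta}(\lambda) = q(x-1)(x-\zeta) + x(q^2-1)(\zeta-1)$ if $\alpha=\beta=\beta'$; $(x-1)[(x-\zeta)+x(q^2-1)]$ if $\alpha=\beta\neq\beta'$; $(q^2-1)[\zeta(x-1)q^{(\alpha-\beta)/2} - \delta_{\alpha\beta'}(x-\zeta)]$ if $\alpha<\beta$; $x(q^2-1)[(x-1)q^{(\alpha-\beta)/2} - \delta_{\alpha\beta'}(x-\zeta)]$ if $\alpha>\beta$. These form a $9\times 9$ $\mathcal{R}$-matrix solving the Yang–Baxter equation. The monodromy matrix is $\mathcal{T}(\lambda) = \mathcal{R}_{a1}(\lambda-\mu_1)\cdots\mathcal{R}_{aL}(\lambda-\mu_L)$ (inhomogeneities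 $\mu_j$), whose $(1,1)$, $(1,2)$, $(1,3)$ entries are denoted $\mathcal{A}(\lambda)$, $\mathcal{B}(\lambda)$, $\mathcal{E}(\lambda)$. Let $\ket{0} = e_1^{\otimes L}$, $\bra{\bar 0} = (e_3^{\otimes L})^{T}$. Partition functions: $\mathcal{Z}(\lambda_1,\dots,\lambda_L) = \bra{\bar 0}\mathcal{E}(\lambda_L)\cdots\mathcal{E}(\lambda_1)\ket{0}$ (symmetric), and $\bar{\mathcal{F}}(v_1,v_2\mid u_1,\dots,u_{L-1}) = \bra{\bar 0}\mathcal{B}(v_2)\mathcal{B}(v_1)\mathcal{E}(u_{L-1})\cdots\mathcal{E}(u_1)\ket{0}$ (symmetric in the $u_i$). Define $\bar\omega(\lambda) \coloneqq \prod_{j=1}^L (e^{2\lambda} - e^{2\mu_j})$ and $\bar{\mathcal{H}}$ by $\bar{\mathcal{F}}(v_1,v_2\mid u_1,\dots,u_{L-1}) = \bar\omega(v_2)\,\bar{\mathcal{H}}(v_1,v_2\mid u_1,\dots,u_{L-1})$. Also $\bar\Lambda(\lambda) \coloneqq \prod_{j=1}^L d_{1,1}(\lambda-\mu_j)$. A set of variables as argument denotes the corresponding (symmetric) arguments. *)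

From HB Require Import structures.
From mathcomp Require Import all_boot all_order all_algebra.
Set Implicit Arguments.
Unset Strict Implicit.
Unset Printing Implicit Defensive.
Import Order.TTheory GRing.Theory Num.Theory.
Local Open Scope ring_scope.

(* Multiplicative parametrisation: a spectral parameter lambda is encoded by
   x = e^{2 lambda}, an inhomogeneity mu_j by m_j = e^{2 mu_j}, so that the
   weight at lambda - mu_j is evaluated at x / m_j.  The anisotropy is encoded
   by s = q^{1/2} = e^{gamma/2}, so q = s^2 and q^{(alpha-beta)/2} = s^(alpha-beta).
   IK = true : Izergin-Korepin (zeta = -q^3);  IK = false : Fateev-Zamolodchikov
   (zeta = q). *)

Section NineteenVertex.
Variable K : fieldType.
Variable IK : bool.
Variable s : K.

Definition qq : K := s ^+ 2.
Definition zeta : K := if IK then - qq ^+ 3 else qq.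

Definition wa (x : K) : K := (x - zeta) * (x - qq ^+ 2).
Definition wb (x : K) : K := qq * (x - 1) * (x - zeta).
Definition wc (x : K) : K := (1 - qq ^+ 2) * (x - zeta).
Definition wcbar (x : K) : K := x * (1 - qq ^+ 2) * (x - zeta).

(* d_{alpha,beta}(x), alpha, beta in {1,2,3}; beta' = 4 - beta *)
Definition wd (x : K) (al be : nat) : K :=
  let dl : K := if al == (4 - be)%N then 1 else 0 in
  if al == be then
    (if al == (4 - be)%N
     then qq * (x - 1) * (x - zeta) + x * (qq ^+ 2 - 1) * (zeta - 1)
     else (x - 1) * ((x - zeta) + x * (qq ^+ 2 - 1)))
  else if (al < be)%N then
    (qq ^+ 2 - 1) * (zeta * (x - 1) * s ^ (Posz al - Posz be) - dl * (x - zeta))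
  else
    x * (qq ^+ 2 - 1) * ((x - 1) * s ^ (Posz al - Posz be) - dl * (x - zeta)).

(* R-matrix entry  R_{(i,j),(k,l)}(x), basis e_i (x) e_j with i,j : 'I_3
   (0-based, i.e. e_{i+1}).  Row (i,j), column (k,l). *)
Definition Rent (x : K) (i j k l : 'I_3) : K :=
  if (i + j != k + l)%N then 0
  else if (i + j == 2)%N then wd x i.+1 k.+1
  else if (i == j) && (j == k) && (k == l) then wa x
  else if (i == k) && (j == l) then wb x
  else if (i == l) && (j == k) then (if (i < j)%N then wc x else wcbar x)
  else 0.

Variable L : nat.
Variable mu : 'I_L -> K.

Definition cfg := {ffun 'I_L -> 'I_3}.

(* Entry (A,B) of the monodromy matrix
   T(x) = R_{a1}(x/m_1) ... R_{aL}(x/m_L), as a kernel on the quantum space: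
   Tent x A B sigma tau = < sigma | T_{AB}(x) | tau >. *)
Definition Tent (x : K) (A B : 'I_3) (sg tau : cfg) : K :=
  \sum_(p : {ffun 'I_L.+1 -> 'I_3} | (p ord0 == A) && (p ord_max == B))
    \prod_(j < L) Rent (x / mu j) (p (inord j)) (sg j) (p (inord j.+1)) (tau j).

Definition opapp (O : cfg -> cfg -> K) (v : cfg -> K) : cfg -> K :=
  fun sg => \sum_(tau : cfg) O sg tau * v tau.

Definition vac0 : cfg -> K := fun tau => if tau == [ffun => ord0] then 1 else 0.
Definition cfg3 : cfg := [ffun => ord_max].

Definition Aop x := Tent x ord0 ord0.
Definition Bop x := Tent x ord0 (inord 1).
Definition Eop x := Tent x ord0 ord_max.

(* E(x_k) ... E(x_1) |0>  for us = [:: x_1; ...; x_k] *)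
Definition Estates (us : seq K) : cfg -> K :=
  foldl (fun v u => opapp (Eop u) v) vac0 us.

(* Z(lambda_1,...,lambda_L) = <0bar| E(lambda_L) ... E(lambda_1) |0> *)
Definition ZZ (xs : seq K) : K := Estates xs cfg3.

(* Fbar(v1,v2 | u_1..u_{L-1}) = <0bar| B(v2) B(v1) E(u_{L-1}) ... E(u_1) |0> *)
Definition Fbar (v1 v2 : K) (us : seq K) : K :=
  opapp (Bop v2) (opapp (Bop v1) (Estates us)) cfg3.

Definition omegabar (y : K) : K := \prod_(j < L) (y - mu j).
Definition Lambdabar (y : K) : K := \prod_(j < L) wd (y / mu j) 1 1.

Definition Hbar (v1 v2 : K) (us : seq K) : K := Fbar v1 v2 us / omegabar v2.

End NineteenVertex.

From Pilot Require Import Defs.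
From HB Require Import structures.
From mathcomp Require Import all_boot all_order all_algebra.
From mathcomp Require Import fraction ring.
Import Order.TTheory GRing.Theory Num.Theory.
Local Open Scope ring_scope.

Set Implicit Arguments.
Unset Strict Implicit.
Unset Printing Implicit Defensive.

(* The Yang-Baxter equation of the nineteen-vertex R-matrix, checked entry by
   entry, gives by induction on the number of sites the RTT relation
   R(x/y) T(x) (x) T(y) = T(y) (x) T(x) R(x/y) for the monodromy matrix.
   Three of its components are used.  The (E,E) component makes the operators E
   commute, so that Z(X) = <0bar| E(x1) Psi and Z(X_1^0) = <0bar| E(x0) Psi with
   Psi = E(x_L) ... E(x_2) |0>.  The other two express a(x1/x0) A(x1) E(x0) and
   a(x1/x0) B(x1) B(x0) through E(x0) A(x1), B(x0) B(x1) and A(x0) E(x1), with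
   coefficients d_{k,1}, resp. d_{k,2}.  As <0bar| is a left eigenvector of A(x)
   with eigenvalue Lambdabar(x), sandwiching them between <0bar| and Psi gives two
   linear relations between Z(X), Z(X_1^0), the two Fbar and the unknown
   <0bar| E(x0) A(x1) Psi; eliminating the latter yields the identity. *)

Section FfunCons.
Variables (T : Type) (n : nat).

Definition fcons (t : T) (g : {ffun 'I_n -> T}) : {ffun 'I_n.+1 -> T} :=
  [ffun i => if unlift ord0 i is Some j then g j else t].
Definition ftail (f : {ffun 'I_n.+1 -> T}) : {ffun 'I_n -> T} :=
  [ffun j => f (lift ord0 j)].

Lemma fcons0 t (g : {ffun 'I_n -> T}) : fcons t g ord0 = t.
Proof. by rewrite ffunE unlift_none. Qed.

Lemma fconsS t (g : {ffun 'I_n -> T}) j : fcons t g (lift ord0 j) = g j.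
Proof. by rewrite ffunE liftK. Qed.

Lemma ftail_fcons t (g : {ffun 'I_n -> T}) : ftail (fcons t g) = g.
Proof. by apply/ffunP => j; rewrite ffunE fconsS. Qed.

Lemma fcons_ftail (f : {ffun 'I_n.+1 -> T}) : fcons (f ord0) (ftail f) = f.
Proof. by apply/ffunP => i; rewrite ffunE; case: unliftP => [j ->|->] //; rewrite ffunE. Qed.

End FfunCons.

Lemma fcons_inord0 (T : Type) n t (g : {ffun 'I_n -> T}) : fcons t g (inord 0) = t.
Proof. by rewrite (_ : inord 0 = ord0) ?fcons0 //; apply/val_inj; rewrite /= inordK. Qed.

Lemma fcons_inordS (T : Type) n t (g : {ffun 'I_n.+1 -> T}) j :
  (j < n.+1)%N -> fcons t g (inord j.+1) = g (inord j).
Proof.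
move=> lt_j_n; rewrite (_ : inord j.+1 = lift ord0 (inord j)) ?fconsS //.
by apply/val_inj; rewrite /= /bump /= !inordK.
Qed.

Lemma eq_ffunS (T : eqType) n (f g : {ffun 'I_n.+1 -> T}) :
  (f == g) = (f ord0 == g ord0) && (ftail f == ftail g).
Proof.
apply/eqP/andP => [->|[/eqP f0_g0 /eqP ftail_eq]] //.
by rewrite -(fcons_ftail f) -(fcons_ftail g) f0_g0 ftail_eq.
Qed.

Lemma big_ffun0 (T : finType) (V : nmodType) (F : {ffun 'I_0 -> T} -> V) g0 :
  \sum_g F g = F g0.
Proof. by rewrite (big_pred1 g0) // => g; apply/esym/eqP/ffunP => -[]. Qed.

Lemma big_ffunS (T : finType) (V : nmodType) n (F : {ffun 'I_n.+1 -> T} -> V) :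
  \sum_f F f = \sum_(t : T) \sum_(g : {ffun 'I_n -> T}) F (fcons t g).
Proof.
rewrite pair_big (reindex (fun p => fcons p.1 p.2)) //=.
exists (fun f : {ffun _ -> _} => (f ord0, ftail f)) => [[t g] _|f _] /=.
  by rewrite fcons0 ftail_fcons.
by rewrite fcons_ftail.
Qed.

Lemma exchange_big_pairs (I1 I2 I3 I4 : finType) (V : nmodType)
    (f : I1 -> I2 -> I3 -> I4 -> V) :
  \sum_a \sum_b \sum_c \sum_d f a b c d = \sum_c \sum_d \sum_a \sum_b f a b c d.
Proof.
under eq_bigr do rewrite exchange_big.
under eq_bigr do under eq_bigr do rewrite exchange_big.
by rewrite exchange_big; apply: eq_bigr => c _; rewrite exchange_big.
Qed.

Lemma big_pairs_mulA (R : comPzSemiRingType) (I J : finType)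
    (a : I -> I -> R) (b : I -> I -> J -> J -> R) (c : J -> J -> R) :
  \sum_i \sum_i' a i i' * (\sum_j \sum_j' b i i' j j' * c j j') =
  \sum_j \sum_j' (\sum_i \sum_i' a i i' * b i i' j j') * c j j'.
Proof.
under eq_bigr do under eq_bigr do rewrite big_distrr.
under eq_bigr do under eq_bigr do under eq_bigr do rewrite big_distrr.
under [RHS]eq_bigr do under eq_bigr do rewrite big_distrl.
under [RHS]eq_bigr do under eq_bigr do under eq_bigr do rewrite big_distrl.
by rewrite exchange_big_pairs; do 4 (apply: eq_bigr => ? _); rewrite /= mulrA.
Qed.

Lemma sum_mul_eqr (R : pzSemiRingType) (I : finType) (F : I -> R) i0 :
  \sum_i F i * (i == i0)%:R = F i0.
Proof.
by rewrite (bigD1 i0) //= eqxx mulr1 big1 ?addr0 // => i /negbTE ->; rewrite mulr0.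
Qed.

Lemma sum_eq_mull (R : pzSemiRingType) (I : finType) (F : I -> R) i0 :
  \sum_i (i0 == i)%:R * F i = F i0.
Proof.
rewrite (bigD1 i0) //= eqxx mul1r big1 ?addr0 // => i.
by rewrite eq_sym => /negbTE ->; rewrite mul0r.
Qed.

Notation o0 := (@Ordinal 3 0 isT).
Notation o1 := (@Ordinal 3 1 isT).
Notation o2 := (@Ordinal 3 2 isT).

Lemma ord3P (P : 'I_3 -> Prop) : P o0 -> P o1 -> P o2 -> forall i, P i.
Proof. by move=> P0 P1 P2 [[|[|[|m]]] lt_m3] //; rewrite (bool_irrelevance lt_m3 isT). Qed.

Lemma big_ord3 (V : nmodType) (F : 'I_3 -> V) : \sum_(i < 3) F i = F o0 + F o1 + F o2.
Proof. by rewrite !big_ord_recl big_ord0 addr0 addrA; congr (F _ + F _ + F _); apply/val_inj. Qed.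
Lemma ord0_3E : ord0 = o0. Proof. exact/val_inj. Qed.
Lemma ord_max_3E : ord_max = o2. Proof. exact/val_inj. Qed.
Lemma inord1_3E : inord 1 = o1. Proof. by apply/val_inj; rewrite /= inordK. Qed.

Section RMatrix.
Variables (K : fieldType) (IK : bool) (s : K).
Hypothesis s_neq0 : s != 0.

Lemma expz_subn (a b : nat) : s ^ (Posz a - Posz b) = s ^+ a / s ^+ b.
Proof. by rewrite expfzDr // -exprnN. Qed.

(* The nonzero entries of [Rent], with the d-weights evaluated.  [None] marks a
   structural zero, so that each of the 729 instances of the Yang-Baxter equation
   below computes down to its few nonzero terms before [field] is called. *)
Definition Rtable (x : K) (i j k l : nat) : option K :=
  match i, j, k, l with
  | 0, 0, 0, 0 | 2, 2, 2, 2 => Some (wa IK s x)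
  | 0, 1, 0, 1 | 1, 0, 1, 0 | 1, 2, 1, 2 | 2, 1, 2, 1 => Some (wb IK s x)
  | 0, 1, 1, 0 | 1, 2, 2, 1 => Some (wc IK s x)
  | 1, 0, 0, 1 | 2, 1, 1, 2 => Some (wcbar IK s x)
  | 0, 2, 0, 2 | 2, 0, 2, 0 => Some ((x - 1) * ((x - zeta IK s) + x * (qq s ^+ 2 - 1)))
  | 0, 2, 1, 1 | 1, 1, 2, 0 => Some ((qq s ^+ 2 - 1) * (zeta IK s * (x - 1) * s^-1))
  | 0, 2, 2, 0 => Some ((qq s ^+ 2 - 1) * (zeta IK s * (x - 1) * s^-2 - (x - zeta IK s)))
  | 1, 1, 0, 2 | 2, 0, 1, 1 => Some (x * (qq s ^+ 2 - 1) * ((x - 1) * s))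
  | 1, 1, 1, 1 => Some (qq s * (x - 1) * (x - zeta IK s) + x * (qq s ^+ 2 - 1) * (zeta IK s - 1))
  | 2, 0, 0, 2 => Some (x * (qq s ^+ 2 - 1) * ((x - 1) * s ^+ 2 - (x - zeta IK s)))
  | _, _, _, _ => None
  end.

Lemma Rent_table x (i j k l : 'I_3) : Rent IK s x i j k l = odflt 0 (Rtable x i j k l).
Proof.
move: i j k l; do 4 apply: ord3P.
all: rewrite /Rent /wd /= ?expz_subn //.
all: by field.
Qed.

Definition oadd (a b : option K) : option K :=
  match a, b with None, _ => b | _, None => a | Some a, Some b => Some (a + b) end.
Definition omul3 (a b c : option K) : option K :=
  if (a, b, c) is (Some a, Some b, Some c) then Some (a * b * c) else None.
Definition osum3 (f : nat -> option K) : option K := oadd (oadd (f 0%N) (f 1%N)) (f 2%N).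

Lemma odflt_add a b : odflt 0 (oadd a b) = odflt 0 a + odflt 0 b.
Proof. by case: a; case: b => //= *; rewrite ?addr0 ?add0r. Qed.
Lemma odflt_mul3 a b c : odflt 0 (omul3 a b c) = odflt 0 a * odflt 0 b * odflt 0 c.
Proof. by case: a; case: b; case: c => //= *; rewrite ?mulr0 ?mul0r. Qed.

Lemma Rent_ybe (w v : K) (A B S E F T : 'I_3) :
  \sum_(C < 3) \sum_(D < 3) \sum_(r < 3)
     Rent IK s w A B C D * Rent IK s (w * v) C S E r * Rent IK s v D r F T =
  \sum_(C < 3) \sum_(D < 3) \sum_(r < 3)
     Rent IK s v B S D r * Rent IK s (w * v) A r C T * Rent IK s w C D E F.
Proof.
have table_ybe : odflt 0 (osum3 (fun C => osum3 (fun D => osum3 (fun r =>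
     omul3 (Rtable w A B C D) (Rtable (w * v) C S E r) (Rtable v D r F T))))) =
  odflt 0 (osum3 (fun C => osum3 (fun D => osum3 (fun r =>
     omul3 (Rtable v B S D r) (Rtable (w * v) A r C T) (Rtable w C D E F))))).
{ move: A B S E F T; do 6 apply: ord3P.
  all: cbv beta iota delta [Rtable nat_of_ord odflt oapp omul3 oadd osum3].
  all: try reflexivity.
  all: rewrite /wa /wb /wc /wcbar /zeta /qq; case: IK.
  all: by field. }
rewrite !big_ord3 !Rent_table.
by move: table_ybe; rewrite /osum3 !odflt_add !odflt_mul3.
Qed.
End RMatrix.

Definition opmul (R : pzSemiRingType) L (O1 O2 : cfg L -> cfg L -> R) :
  cfg L -> cfg L -> R := fun sg tau => \sum_rho O1 sg rho * O2 rho tau.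

Section Monodromy.
Variables (K : fieldType) (IK : bool) (s : K).

Lemma opapp_mul L (O1 O2 : cfg L -> cfg L -> K) v :
  opapp (opmul O1 O2) v =1 opapp O1 (opapp O2 v).
Proof.
move=> sg; rewrite /opapp /opmul; under [RHS]eq_bigr do rewrite big_distrr.
rewrite exchange_big; apply: eq_bigr => rho _; rewrite big_distrl.
by apply: eq_bigr => tau _; rewrite /= mulrA.
Qed.

Lemma Tent_nil (mu : 'I_0 -> K) x A B sg tau : Tent IK s mu x A B sg tau = (A == B)%:R.
Proof.
rewrite /Tent (_ : ord_max = ord0); last exact/val_inj.
under eq_bigr do rewrite big_ord0.
rewrite big_mkcond big_ffunS /=.
under eq_bigr => t _ do rewrite (big_ffun0 _ [ffun => t]) fcons0.
rewrite -big_mkcond /= (eq_bigl (fun t => (t == A) && (A == B))); last first.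
  by move=> t; case: (t =P A) => // ->.
case: eqP => _; last by rewrite big_pred0 // => t; rewrite andbF.
by rewrite (big_pred1 A) // => t; rewrite andbT.
Qed.

Lemma Tent_cons L (mu : 'I_L.+1 -> K) x A B sg tau :
  Tent IK s mu x A B sg tau =
  \sum_(C < 3) Rent IK s (x / mu ord0) A (sg ord0) C (tau ord0) *
               Tent IK s (mu \o lift ord0) x C B (ftail sg) (ftail tau).
Proof.
rewrite /Tent big_mkcond big_ffunS /=.
pose P (g : {ffun 'I_L.+1 -> 'I_3}) := \prod_(j < L)
  Rent IK s (x / mu (lift ord0 j)) (g (inord j)) (ftail sg j) (g (inord j.+1)) (ftail tau j).
transitivity (\sum_(t < 3) \sum_(g : {ffun 'I_L.+1 -> 'I_3})
   if (t == A) && (g ord_max == B) then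
     Rent IK s (x / mu ord0) t (sg ord0) (g ord0) (tau ord0) * P g else 0).
  apply: eq_bigr => t _; apply: eq_bigr => g _.
  rewrite fcons0 (_ : ord_max = lift ord0 ord_max) ?fconsS; last exact/val_inj.
  case: ifP => // _; rewrite big_ord_recl fcons_inord0 (fcons_inordS _ _ (ltn0Sn _)).
  rewrite (_ : inord 0 = ord0); last by apply/val_inj; rewrite /= inordK.
  congr (_ * _); apply: eq_bigr => j _.
  have lt_jS : (j.+1 < L.+1)%N by rewrite ltnS.
  by rewrite lift0 (fcons_inordS _ _ (ltnW lt_jS)) (fcons_inordS _ _ lt_jS) !ffunE.
rewrite (bigD1 A) //= [X in _ + X]big1 ?addr0; last first.
  by move=> t /negbTE t_neqA; rewrite t_neqA; apply: big1.
transitivity (\sum_(g : {ffun 'I_L.+1 -> 'I_3}) \sum_(C < 3)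
   if (g ord0 == C) && (g ord_max == B) then
     Rent IK s (x / mu ord0) A (sg ord0) C (tau ord0) * P g else 0).
  apply: eq_bigr => g _; rewrite eqxx (bigD1 (g ord0)) //= eqxx big1 ?addr0 //.
  by move=> C /negbTE; rewrite eq_sym => ->.
rewrite exchange_big; apply: eq_bigr => C _.
rewrite big_distrr /= [in RHS]big_mkcond; apply: eq_bigr => g _.
by case: ifP; rewrite ?mulr0.
Qed.

End Monodromy.

Section RTT.
Variables (K : fieldType) (IK : bool) (s : K).
Hypothesis s_neq0 : s != 0.

Lemma opmul_Tent_nil (mu : 'I_0 -> K) x y C A D B sg tau :
  opmul (Tent IK s mu x C A) (Tent IK s mu y D B) sg tau = (C == A)%:R * (D == B)%:R.
Proof. by rewrite /opmul (big_ffun0 _ sg) !Tent_nil. Qed.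

Lemma opmul_Tent_cons L (mu : 'I_L.+1 -> K) x y C A D B sg tau :
  opmul (Tent IK s mu x C A) (Tent IK s mu y D B) sg tau =
  \sum_(E < 3) \sum_(F < 3)
    (\sum_(r < 3) Rent IK s (x / mu ord0) C (sg ord0) E r *
                  Rent IK s (y / mu ord0) D r F (tau ord0)) *
    opmul (Tent IK s (mu \o lift ord0) x E A) (Tent IK s (mu \o lift ord0) y F B)
      (ftail sg) (ftail tau).
Proof.
rewrite /opmul big_ffunS.
under eq_bigr do under eq_bigr do
  rewrite !Tent_cons fcons0 ftail_fcons big_distrlr /=.
under [RHS]eq_bigr do under eq_bigr do rewrite big_distrlr /=.
rewrite /= exchange_big_pairs; do 4 (apply: eq_bigr => ? _).
by rewrite mulrACA.
Qed.

Lemma Tent_rtt L (mu : 'I_L -> K) (mu_neq0 : forall j, mu j != 0) (x y : K) (y_neq0 : y != 0)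
    A B A' B' sg tau :
  \sum_(C < 3) \sum_(D < 3)
    Rent IK s (x / y) A B C D * opmul (Tent IK s mu x C A') (Tent IK s mu y D B') sg tau =
  \sum_(C < 3) \sum_(D < 3)
    opmul (Tent IK s mu y B D) (Tent IK s mu x A C) sg tau * Rent IK s (x / y) C D A' B'.
Proof.
elim: L mu mu_neq0 sg tau A B A' B' => [|L IH] mu mu_neq0 sg tau A B A' B'.
  under eq_bigr do under eq_bigr do rewrite opmul_Tent_nil mulrA.
  under [RHS]eq_bigr do under eq_bigr do rewrite opmul_Tent_nil -mulrA.
  under eq_bigr do rewrite sum_mul_eqr.
  under [RHS]eq_bigr do rewrite sum_eq_mull.
  by rewrite sum_mul_eqr sum_eq_mull.
have x_mu0 : x / mu ord0 = x / y * (y / mu ord0) by field; rewrite y_neq0 mu_neq0.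
under eq_bigr do under eq_bigr do rewrite opmul_Tent_cons.
under [RHS]eq_bigr do under eq_bigr do rewrite opmul_Tent_cons.
rewrite /= x_mu0; set w := x / y; set v := y / mu ord0.
set mu' := mu \o lift ord0; set sg' := ftail sg; set tau' := ftail tau.
have mu'_neq0 j : mu' j != 0 by apply: mu_neq0.
(* Through the first site R(x/y) is moved by the Yang-Baxter equation, through the
   others by the induction hypothesis. *)
transitivity (\sum_(E < 3) \sum_(F < 3)
   (\sum_(C < 3) \sum_(D < 3) \sum_(r < 3) Rent IK s w A B C D *
        Rent IK s (w * v) C (sg ord0) E r * Rent IK s v D r F (tau ord0)) *
   opmul (Tent IK s mu' x E A') (Tent IK s mu' y F B') sg' tau').
  rewrite big_pairs_mulA; do 2 (apply: eq_bigr => ? _); congr (_ * _).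
  do 2 (apply: eq_bigr => ? _); rewrite big_distrr.
  by apply: eq_bigr => r _; rewrite /= mulrA.
transitivity (\sum_(E < 3) \sum_(F < 3)
   (\sum_(C < 3) \sum_(D < 3) \sum_(r < 3) Rent IK s v B (sg ord0) D r *
        Rent IK s (w * v) A r C (tau ord0) * Rent IK s w C D E F) *
   opmul (Tent IK s mu' x E A') (Tent IK s mu' y F B') sg' tau').
  by do 2 (apply: eq_bigr => ? _); congr (_ * _); apply: Rent_ybe.
transitivity (\sum_(C < 3) \sum_(D < 3)
   (\sum_(r < 3) Rent IK s v B (sg ord0) D r * Rent IK s (w * v) A r C (tau ord0)) *
   (\sum_(E < 3) \sum_(F < 3) Rent IK s w C D E F *
      opmul (Tent IK s mu' x E A') (Tent IK s mu' y F B') sg' tau')).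
  rewrite big_pairs_mulA; do 2 (apply: eq_bigr => ? _); congr (_ * _).
  by do 2 (apply: eq_bigr => ? _); rewrite big_distrl.
transitivity (\sum_(C < 3) \sum_(D < 3)
   (\sum_(r < 3) Rent IK s v B (sg ord0) D r * Rent IK s (w * v) A r C (tau ord0)) *
   (\sum_(E < 3) \sum_(F < 3)
      opmul (Tent IK s mu' y D F) (Tent IK s mu' x C E) sg' tau' * Rent IK s w E F A' B')).
  by do 2 (apply: eq_bigr => ? _); congr (_ * _); apply: IH.
rewrite big_pairs_mulA; do 2 (apply: eq_bigr => ? _); congr (_ * _).
by rewrite exchange_big.
Qed.

End RTT.

Section Bra.
Variables (K : fieldType) (IK : bool) (s : K).

Lemma Rent_bra x C r :
  Rent IK s x C o2 o0 r = (C == o0)%:R * wd IK s x 1 1 * (r == o2)%:R.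
Proof. by move: C r; do 2 apply: ord3P; rewrite /Rent /= ?mulr1 ?mul1r ?mulr0 ?mul0r. Qed.

Lemma Tent_bra L (mu : 'I_L -> K) x C rho :
  Tent IK s mu x C ord0 (cfg3 L) rho =
  (C == ord0)%:R * Lambdabar IK s mu x * (rho == cfg3 L)%:R.
Proof.
elim: L mu C rho => [|L IH] mu C rho.
  rewrite Tent_nil /Lambdabar big_ord0 mulr1 (_ : rho == cfg3 0) ?mulr1 //.
  by apply/eqP/ffunP => -[].
have ftail_cfg3 : ftail (cfg3 L.+1) = cfg3 L by apply/ffunP => j; rewrite !ffunE.
rewrite Tent_cons ftail_cfg3; under eq_bigr do rewrite IH -!mulrA mulrA.
rewrite -big_distrl sum_mul_eqr /= eq_ffunS ftail_cfg3 -mulnb natrM.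
rewrite /Lambdabar big_ord_recl ffunE ord_max_3E ord0_3E Rent_bra /=.
ring.
Qed.

Lemma bra_Aop L (mu : 'I_L -> K) x v :
  opapp (Aop IK s mu x) v (cfg3 L) = Lambdabar IK s mu x * v (cfg3 L).
Proof.
rewrite /opapp /Aop; under eq_bigr do rewrite Tent_bra eqxx mul1r.
rewrite (bigD1 (cfg3 L)) //= eqxx mulr1 big1 ?addr0 // => rho /negbTE ->.
by rewrite mulr0 mul0r.
Qed.

End Bra.

Section RTTComponents.
Variables (K : fieldType) (IK : bool) (s : K).
Hypothesis s_neq0 : s != 0.
Variables (L : nat) (mu : 'I_L -> K).
Hypothesis mu_neq0 : forall j, mu j != 0.
Variables (x y : K).
Hypothesis y_neq0 : y != 0.

Lemma rtt_AE sg tau :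
  wa IK s (x / y) * opmul (Aop IK s mu x) (Eop IK s mu y) sg tau =
  opmul (Eop IK s mu y) (Aop IK s mu x) sg tau * wd IK s (x / y) 1 1 +
  opmul (Bop IK s mu y) (Bop IK s mu x) sg tau * wd IK s (x / y) 2 1 +
  opmul (Aop IK s mu y) (Eop IK s mu x) sg tau * wd IK s (x / y) 3 1.
Proof.
have := Tent_rtt IK s_neq0 mu_neq0 x y_neq0 o0 o0 o0 o2 sg tau.
rewrite !big_ord3 /Rent /= !mul0r !mulr0 !add0r !addr0.
by rewrite /Aop /Bop /Eop ord0_3E ord_max_3E inord1_3E.
Qed.

Lemma rtt_BB sg tau :
  wa IK s (x / y) * opmul (Bop IK s mu x) (Bop IK s mu y) sg tau =
  opmul (Eop IK s mu y) (Aop IK s mu x) sg tau * wd IK s (x / y) 1 2 +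
  opmul (Bop IK s mu y) (Bop IK s mu x) sg tau * wd IK s (x / y) 2 2 +
  opmul (Aop IK s mu y) (Eop IK s mu x) sg tau * wd IK s (x / y) 3 2.
Proof.
have := Tent_rtt IK s_neq0 mu_neq0 x y_neq0 o0 o0 o1 o1 sg tau.
rewrite !big_ord3 /Rent /= !mul0r !mulr0 !add0r !addr0.
by rewrite /Aop /Bop /Eop ord0_3E ord_max_3E inord1_3E.
Qed.

Lemma rtt_EE sg tau :
  wa IK s (x / y) * opmul (Eop IK s mu x) (Eop IK s mu y) sg tau =
  opmul (Eop IK s mu y) (Eop IK s mu x) sg tau * wa IK s (x / y).
Proof.
have := Tent_rtt IK s_neq0 mu_neq0 x y_neq0 o0 o0 o2 o2 sg tau.
rewrite !big_ord3 /Rent /= !mul0r !mulr0 !add0r !addr0.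
by rewrite /Eop ord0_3E ord_max_3E.
Qed.

End RTTComponents.

(* The weights and the monodromy matrix over a commutative ring with units; over a
   field they are convertible to those of [Defs].  Over [{poly K}] they allow the
   spectral parameter to be an indeterminate. *)
Section RingWeights.
Variables (R : comUnitRingType) (IK : bool) (s : R).

Definition qqR : R := s ^+ 2.
Definition zetaR : R := if IK then - qqR ^+ 3 else qqR.
Definition waR (x : R) : R := (x - zetaR) * (x - qqR ^+ 2).
Definition wbR (x : R) : R := qqR * (x - 1) * (x - zetaR).
Definition wcR (x : R) : R := (1 - qqR ^+ 2) * (x - zetaR).
Definition wcbarR (x : R) : R := x * (1 - qqR ^+ 2) * (x - zetaR).
Definition wdR (x : R) (al be : nat) : R :=
  let dl : R := if al == (4 - be)%N then 1 else 0 in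
  if al == be then
    (if al == (4 - be)%N
     then qqR * (x - 1) * (x - zetaR) + x * (qqR ^+ 2 - 1) * (zetaR - 1)
     else (x - 1) * ((x - zetaR) + x * (qqR ^+ 2 - 1)))
  else if (al < be)%N then
    (qqR ^+ 2 - 1) * (zetaR * (x - 1) * s ^ (Posz al - Posz be) - dl * (x - zetaR))
  else
    x * (qqR ^+ 2 - 1) * ((x - 1) * s ^ (Posz al - Posz be) - dl * (x - zetaR)).
Definition RentR (x : R) (i j k l : 'I_3) : R :=
  if (i + j != k + l)%N then 0
  else if (i + j == 2)%N then wdR x i.+1 k.+1
  else if (i == j) && (j == k) && (k == l) then waR x
  else if (i == k) && (j == l) then wbR x
  else if (i == l) && (j == k) then (if (i < j)%N then wcR x else wcbarR x)
  else 0.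
Definition TentR L (mu : 'I_L -> R) (x : R) (A B : 'I_3) (sg tau : cfg L) : R :=
  \sum_(p : {ffun 'I_L.+1 -> 'I_3} | (p ord0 == A) && (p ord_max == B))
    \prod_(j < L) RentR (x / mu j) (p (inord j)) (sg j) (p (inord j.+1)) (tau j).

End RingWeights.

Lemma waR_field (K : fieldType) IK (s x : K) : waR IK s x = wa IK s x.
Proof. by []. Qed.

Lemma TentR_field (K : fieldType) IK (s : K) L (mu : 'I_L -> K) x A B :
  TentR IK s mu x A B = Tent IK s mu x A B.
Proof. by []. Qed.

Section RMorphWeights.
Variables (R S : comUnitRingType) (f : {rmorphism R -> S}) (IK : bool) (s : R).
Hypothesis s_unit : s \is a GRing.unit.

Lemma rmorph_qq : f (qqR s) = qqR (f s).
Proof. exact: rmorphXn. Qed.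

Lemma rmorph_zeta : f (zetaR IK s) = zetaR IK (f s).
Proof. by rewrite /zetaR /qqR; case: IK; rewrite ?rmorphN !rmorphXn. Qed.

Lemma rmorph_RentR x i j k l : f (RentR IK s x i j k l) = RentR IK (f s) (f x) i j k l.
Proof.
rewrite /RentR /wdR /waR /wbR /wcR /wcbarR /zetaR /qqR; case: IK.
all: by do !case: ifP => _;
  rewrite ?(rmorph0, rmorph1, rmorphM, rmorphD, rmorphB, rmorphN, rmorphXn, rmorphXz _ _ s_unit).
Qed.

Lemma rmorph_TentR L (mu : 'I_L -> R) (mu' : 'I_L -> S) s' x x' :
  (forall j, mu j \is a GRing.unit) -> f s = s' -> (forall j, f (mu j) = mu' j) ->
  f x = x' -> forall A B sg tau, f (TentR IK s mu x A B sg tau) = TentR IK s' mu' x' A B sg tau.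
Proof.
move=> mu_unit <- f_mu <- A B sg tau; rewrite rmorph_sum; apply: eq_bigr => p _.
by rewrite rmorph_prod; apply: eq_bigr => j _; rewrite rmorph_RentR rmorphM rmorphV ?f_mu.
Qed.

Lemma rmorph_opmul_TentR L (mu : 'I_L -> R) (mu' : 'I_L -> S) s' x x' y y' :
  (forall j, mu j \is a GRing.unit) -> f s = s' -> (forall j, f (mu j) = mu' j) ->
  f x = x' -> f y = y' -> forall A B C D sg tau,
  f (opmul (TentR IK s mu x A B) (TentR IK s mu y C D) sg tau) =
  opmul (TentR IK s' mu' x' A B) (TentR IK s' mu' y' C D) sg tau.
Proof.
move=> mu_unit f_s f_mu f_x f_y A B C D sg tau; rewrite rmorph_sum; apply: eq_bigr => rho _.
by rewrite rmorphM (rmorph_TentR mu_unit f_s f_mu f_x) (rmorph_TentR mu_unit f_s f_mu f_y).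
Qed.

End RMorphWeights.

Lemma polyC_unit (K : fieldType) (c : K) : c != 0 -> c%:P \is a GRing.unit.
Proof. by move=> c_neq0; rewrite poly_unitE size_polyC c_neq0 coefC /= unitfE. Qed.

Lemma tofracX_div_neqC (K : fieldType) (y c : K) :
  y != 0 -> tofrac 'X / tofrac y%:P - tofrac c%:P != 0 :> {fraction {poly K}}.
Proof.
move=> y_neq0; rewrite subr_eq0; apply/negP => /eqP X_div_y.
have tofracC_neq0 : tofrac y%:P != 0 :> {fraction {poly K}} by rewrite tofrac_eq0 polyC_eq0.
have /eqP : tofrac 'X = tofrac (c * y)%:P :> {fraction {poly K}}.
  by rewrite polyCM tofracM -X_div_y divfK.
rewrite tofrac_eq => /eqP/(congr1 (fun p : {poly K} => size p)).
by rewrite /= size_polyX size_polyC; case: (_ != 0).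
Qed.

Lemma waR_tofracX_neq0 (K : fieldType) IK (s y : K) : y != 0 ->
  waR IK (tofrac s%:P) (tofrac 'X / tofrac y%:P) != 0 :> {fraction {poly K}}.
Proof.
move=> y_neq0.
have zetaF : zetaR IK (tofrac s%:P) = tofrac (zetaR IK s)%:P :> {fraction {poly K}}.
  by rewrite (rmorph_zeta polyC) (rmorph_zeta (@tofrac _)).
have qqF : qqR (tofrac s%:P) = tofrac (qqR s)%:P :> {fraction {poly K}}.
  by rewrite (rmorph_qq polyC) (rmorph_qq (@tofrac _)).
rewrite /waR zetaF qqF -(rmorphXn (@tofrac _)) -(rmorphXn polyC).
by rewrite mulf_neq0 ?tofracX_div_neqC.
Qed.

(* The (E,E) component of the RTT relation only gives
   a(x/y) E(x)E(y) = a(x/y) E(y)E(x).  But E(x)E(y) - E(y)E(x) is a polynomial in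
   x, and a(X/y) does not vanish in the fraction field of K[X]. *)
Lemma Eop_commute (K : fieldType) IK (s : K) L (mu : 'I_L -> K) :
  s != 0 -> (forall j, mu j != 0) -> forall x y : K, y != 0 ->
  opmul (Eop IK s mu x) (Eop IK s mu y) =2 opmul (Eop IK s mu y) (Eop IK s mu x).
Proof.
move=> s_neq0 mu_neq0 x y y_neq0 sg tau.
pose muP j := (mu j)%:P.
pose EE (a b : {poly K}) :=
  opmul (TentR IK s%:P muP a ord0 ord_max) (TentR IK s%:P muP b ord0 ord_max) sg tau.
have sP_unit : s%:P \is a GRing.unit by exact: polyC_unit.
have muP_unit j : muP j \is a GRing.unit by exact: polyC_unit.
have evalE : horner_eval x (EE 'X y%:P - EE y%:P 'X) =
    opmul (Eop IK s mu x) (Eop IK s mu y) sg tau -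
    opmul (Eop IK s mu y) (Eop IK s mu x) sg tau.
  have eval_muP j : horner_eval x (muP j) = mu j by rewrite horner_evalE hornerC.
  have evalT := rmorph_opmul_TentR (f := horner_eval x) IK sP_unit muP_unit
    (hornerC s x) eval_muP.
  by rewrite rmorphB (evalT _ _ _ _ (hornerX x) (hornerC y x))
    (evalT _ _ _ _ (hornerC y x) (hornerX x)).
pose F := {fraction {poly K}}.
have fracE : tofrac (EE 'X y%:P - EE y%:P 'X) = 0 :> F.
  pose sF : F := tofrac s%:P; pose X : F := tofrac 'X; pose Y : F := tofrac y%:P.
  have fracT := rmorph_opmul_TentR (f := @tofrac _) IK sP_unit muP_unit
    (erefl sF) (fun j => erefl).
  rewrite rmorphB (fracT _ _ _ _ (erefl X) (erefl Y)) (fracT _ _ _ _ (erefl Y) (erefl X)).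
  have sF_neq0 : sF != 0 by rewrite tofrac_eq0 polyC_eq0.
  have Y_neq0 : Y != 0 by rewrite tofrac_eq0 polyC_eq0.
  have muF_neq0 j : tofrac (muP j) != 0 :> F by rewrite tofrac_eq0 polyC_eq0.
  have wa_neq0 := waR_tofracX_neq0 IK s y_neq0.
  have := rtt_EE IK sF_neq0 muF_neq0 X Y_neq0 sg tau.
  rewrite /Eop -(TentR_field _ _ _ X) -(TentR_field _ _ _ Y) -waR_field [RHS]mulrC.
  move=> /(mulfI wa_neq0) EEF.
  by apply/eqP; rewrite subr_eq0; apply/eqP; exact EEF.
move/eqP: fracE; rewrite tofrac_eq0 => /eqP EE_eq0.
by apply/eqP; rewrite -subr_eq0 -evalE EE_eq0 rmorph0.
Qed.

Section States.
Variables (K : fieldType) (IK : bool) (s : K).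
Hypothesis s_neq0 : s != 0.
Variables (L : nat) (mu : 'I_L -> K).
Hypothesis mu_neq0 : forall j, mu j != 0.

Lemma Estates_cons x us : (forall u, u \in us -> u != 0) ->
  Estates IK s mu (x :: us) =1 opapp (Eop IK s mu x) (Estates IK s mu us).
Proof.
pose Estep v u := opapp (Eop IK s mu u) v.
have opapp_eq O v1 v2 : v1 =1 v2 -> opapp O v1 =1 opapp O v2.
  by move=> v12 sg; apply: eq_bigr => tau _; rewrite v12.
have foldl_eq us' v1 v2 : v1 =1 v2 -> foldl Estep v1 us' =1 foldl Estep v2 us'.
  by elim: us' v1 v2 => [|u us' IH] v1 v2 v12 //=; apply/IH/opapp_eq.
rewrite /Estates /=; move: (vac0 K (L := L)).
elim: us => [|u us IH] v us_neq0 //= sg.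
have u_neq0 : u != 0 by apply: us_neq0; rewrite inE eqxx.
rewrite -IH => [|u' u'_in]; last by apply: us_neq0; rewrite inE u'_in orbT.
apply: foldl_eq => {}sg; rewrite -!opapp_mul; apply: eq_bigr => rho _.
by rewrite (Eop_commute IK s_neq0 mu_neq0 x u_neq0).
Qed.

Lemma bra_AE x y v : y != 0 ->
  wa IK s (x / y) * Lambdabar IK s mu x * opapp (Eop IK s mu y) v (cfg3 L) =
  opapp (Eop IK s mu y) (opapp (Aop IK s mu x) v) (cfg3 L) * wd IK s (x / y) 1 1 +
  opapp (Bop IK s mu y) (opapp (Bop IK s mu x) v) (cfg3 L) * wd IK s (x / y) 2 1 +
  Lambdabar IK s mu y * opapp (Eop IK s mu x) v (cfg3 L) * wd IK s (x / y) 3 1.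
Proof.
move=> y_neq0; rewrite -mulrA -!bra_Aop -!opapp_mul /opapp.
rewrite big_distrr !big_distrl -!big_split.
by apply: eq_bigr => tau _; rewrite /= mulrA (rtt_AE IK s_neq0 mu_neq0 x y_neq0) /=; ring.
Qed.

Lemma bra_BB x y v : y != 0 ->
  wa IK s (x / y) * opapp (Bop IK s mu x) (opapp (Bop IK s mu y) v) (cfg3 L) =
  opapp (Eop IK s mu y) (opapp (Aop IK s mu x) v) (cfg3 L) * wd IK s (x / y) 1 2 +
  opapp (Bop IK s mu y) (opapp (Bop IK s mu x) v) (cfg3 L) * wd IK s (x / y) 2 2 +
  Lambdabar IK s mu y * opapp (Eop IK s mu x) v (cfg3 L) * wd IK s (x / y) 3 2.
Proof.
move=> y_neq0; rewrite -bra_Aop -!opapp_mul /opapp.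
rewrite big_distrr !big_distrl -!big_split.
by apply: eq_bigr => tau _; rewrite /= mulrA (rtt_BB IK s_neq0 mu_neq0 x y_neq0) /=; ring.
Qed.

End States.

Lemma eliminate_EA (K : fieldType)
    (a d11 d12 d21 d22 d31 d32 La0 La1 w0 w1 Z0 Z1 F01 F10 U : K) :
  d12 != 0 -> d32 != 0 -> w0 != 0 -> w1 != 0 ->
  a * La1 * Z0 = U * d11 + F10 * d21 + La0 * Z1 * d31 ->
  a * F01 = U * d12 + F10 * d22 + La0 * Z1 * d32 ->
  (d11 / d12 - d31 / d32) * La0 * Z1 + a / d32 * La1 * Z0 =
  (d21 / d32 - d22 / d32 * (d11 / d12)) * w0 * (F10 / w0) +
  a / d32 * (d11 / d12) * w1 * (F01 / w1).
Proof.
move=> d12_neq0 d32_neq0 w0_neq0 w1_neq0 rel_AE rel_BB.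
apply/eqP; rewrite -subr_eq0; apply/eqP.
transitivity ((d12 * (a * La1 * Z0 - (U * d11 + F10 * d21 + La0 * Z1 * d31)) -
               d11 * (a * F01 - (U * d12 + F10 * d22 + La0 * Z1 * d32))) / (d12 * d32)).
  by field; rewrite d12_neq0 d32_neq0 w0_neq0 w1_neq0.
by rewrite rel_AE rel_BB !subrr !mulr0 subrr mul0r.
Qed.

Theorem lemma4p2 (K : fieldType) (IK : bool) (s : K) (n : nat)
  (mu : 'I_n.+1 -> K) (x0 x1 : K) (xr : n.-tuple K) :
  s != 0 ->
  (forall j, mu j != 0) ->
  x0 != 0 -> x1 != 0 -> (forall y, y \in (xr : seq K) -> y != 0) ->
  wd IK s (x1 / x0) 1 2 != 0 ->
  wd IK s (x1 / x0) 3 2 != 0 ->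
  omegabar mu x0 != 0 -> omegabar mu x1 != 0 ->
  let y := x1 / x0 in
  let r11 := wd IK s y 1 1 / wd IK s y 1 2 in
  let Om0 := (r11 - wd IK s y 3 1 / wd IK s y 3 2) * Lambdabar IK s mu x0 in
  let Om1 := wa IK s y / wd IK s y 3 2 * Lambdabar IK s mu x1 in
  let Ups0 := (wd IK s y 2 1 / wd IK s y 3 2
               - wd IK s y 2 2 / wd IK s y 3 2 * r11) * omegabar mu x0 in
  let Ups1 := wa IK s y / wd IK s y 3 2 * r11 * omegabar mu x1 in
  Om0 * ZZ IK s mu (x1 :: xr) + Om1 * ZZ IK s mu (x0 :: xr)
  = Ups0 * Hbar IK s mu x1 x0 xr + Ups1 * Hbar IK s mu x0 x1 xr.
Proof.
move=> s_neq0 mu_neq0 x0_neq0 _ xr_neq0 d12_neq0 d32_neq0 w0_neq0 w1_neq0.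
move=> y r11 Om0 Om1 Ups0 Ups1; rewrite {}/Om0 {}/Om1 {}/Ups0 {}/Ups1 {}/r11 {}/y.
rewrite /Hbar /Fbar /ZZ !(Estates_cons IK s_neq0 mu_neq0 _ xr_neq0).
apply: eliminate_EA => //.
- exact: bra_AE.
- exact: bra_BB.
Qed.
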